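(* Let $Z$ be a Banach space and $E,F$ closed subspaces of $Z$. Then $d_K(Z/E,Z/F)\le 2\Lambda(E,F)$.
   Context: For closed subspaces $E,F$ of $Z$, the gap $\Lambda(E,F)$ is the Hausdorff distance in $Z$ between the closed unit balls $B_E$ and $B_F$. The Kadets distance $d_K(X,Y)$ is the infimum, over all Banach spaces $W$ and linear isometric embeddings $U:X\to W$, $V:Y\to W$, of $\Lambda(UX,VY)$. *)

From HB Require Import structures.
From mathcomp Require Import all_boot all_order all_algebra.
From mathcomp Require Import all_classical all_reals all_analysis.
From mathcomp Require Import ring lra.
Set Implicit Arguments.
Unset Strict Implicit.
Unset Printing Implicit Defensive.
Import Order.TTheory GRing.Theory Num.Theory.
Import numFieldNormedType.Exports.
Local Open Scope classical_set_scope.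
Local Open Scope ring_scope.

Record closed_subspace (R : realType) (Z : normedModType R) := ClosedSubspace {
  cs_set :> set Z;
  cs_0 : cs_set 0;
  cs_lin : forall (a : R) (x y : Z), cs_set x -> cs_set y -> cs_set (a *: x + y);
  cs_closed : closed cs_set }.

Section Quotient.
Context {R : realType} {Z : normedModType R} (E : closed_subspace Z).

Local Notation S := (cs_set E).

Lemma csD x y : S x -> S y -> S (x + y).
Proof. by move=> Ex Ey; have := cs_lin 1 Ex Ey; rewrite scale1r. Qed.

Lemma csZ (a : R) x : S x -> S (a *: x).
Proof. by move=> Ex; have := cs_lin a Ex (cs_0 E); rewrite addr0. Qed.

Lemma csN x : S x -> S (- x).
Proof. by move=> /(csZ (-1)); rewrite scaleN1r. Qed.

Lemma csB x y : S x -> S y -> S (x - y).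
Proof. by move=> Ex Ey; apply: csD => //; exact: csN. Qed.

Definition coset (z : Z) : set Z := [set y | S (y - z)].

Record quot_space := QuotSpace {
  qset : set Z ;
  qsetP : exists z, qset = coset z }.

HB.instance Definition _ := gen_eqMixin quot_space.
HB.instance Definition _ := gen_choiceMixin quot_space.

Lemma qset_inj : injective qset.
Proof.
move=> [A PA] [B PB] /= AB; subst B; congr QuotSpace; exact: Prop_irrelevance.
Qed.

Definition qpi (z : Z) : quot_space := @QuotSpace (coset z) (ex_intro _ z erefl).

Lemma coset_eq x y : coset x = coset y <-> S (x - y).
Proof.
split=> [cxy|Exy].
  have : coset x y by rewrite cxy /coset /= subrr; exact: cs_0.
  by rewrite /coset /= => /csN; rewrite opprB.
apply/funext => w; apply/propext; rewrite /coset /=; split => H.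
  by have := csD H Exy; rewrite addrA subrK.
by have := csB H Exy; rewrite opprB addrA subrK.
Qed.

Lemma qpi_eq x y : qpi x = qpi y <-> S (x - y).
Proof.
split=> [/(congr1 qset)/coset_eq//|/coset_eq cxy]; exact: qset_inj.
Qed.

Definition qrep (q : quot_space) : Z := projT1 (cid (qsetP q)).

Lemma qrepK q : qpi (qrep q) = q.
Proof. by apply: qset_inj; rewrite /qrep; case: cid => z /= ->. Qed.

Lemma qind (P : quot_space -> Prop) : (forall z, P (qpi z)) -> forall q, P q.
Proof. by move=> H q; rewrite -(qrepK q). Qed.

Lemma qrepP z : S (qrep (qpi z) - z).
Proof. by apply/qpi_eq; rewrite qrepK. Qed.

Definition qzero := qpi 0.
Definition qadd q1 q2 := qpi (qrep q1 + qrep q2).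
Definition qopp q := qpi (- qrep q).
Definition qscale (a : R) q := qpi (a *: qrep q).

Lemma qaddE x y : qadd (qpi x) (qpi y) = qpi (x + y).
Proof.
apply/qpi_eq; rewrite opprD addrACA; exact: csD (qrepP x) (qrepP y).
Qed.

Lemma qoppE x : qopp (qpi x) = qpi (- x).
Proof. by apply/qpi_eq; rewrite opprK addrC -opprB; exact/csN/qrepP. Qed.

Lemma qscaleE a x : qscale a (qpi x) = qpi (a *: x).
Proof. by apply/qpi_eq; rewrite -scalerBr; exact/csZ/qrepP. Qed.

Lemma qaddA : associative qadd.
Proof.
by elim/qind => x; elim/qind => y; elim/qind => z; rewrite !qaddE addrA.
Qed.

Lemma qaddC : commutative qadd.
Proof. by elim/qind => x; elim/qind => y; rewrite !qaddE addrC. Qed.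

Lemma qadd0 : left_id qzero qadd.
Proof. by elim/qind => x; rewrite /qzero qaddE add0r. Qed.

Lemma qaddN : left_inverse qzero qopp qadd.
Proof. by elim/qind => x; rewrite qoppE qaddE addNr. Qed.

HB.instance Definition _ := GRing.isZmodule.Build quot_space qaddA qaddC qadd0 qaddN.

Lemma qpiD x y : qpi x + qpi y = qpi (x + y).
Proof. exact: qaddE. Qed.

Lemma qpi0 : 0 = qpi 0.
Proof. by []. Qed.

Lemma qscaleA a b v : qscale a (qscale b v) = qscale (a * b) v.
Proof. by elim/qind: v => x; rewrite !qscaleE scalerA. Qed.

Lemma qscale1 : left_id 1 qscale.
Proof. by elim/qind => x; rewrite qscaleE scale1r. Qed.

Lemma qscaleDr : right_distributive qscale +%R.
Proof.
move=> a; elim/qind => x; elim/qind => y.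
by rewrite qpiD !qscaleE qpiD scalerDr.
Qed.

Lemma qscaleDl v : {morph qscale^~ v : a b / a + b}.
Proof.
elim/qind: v => x a b.
by rewrite !qscaleE qpiD scalerDl.
Qed.

HB.instance Definition _ :=
  GRing.Zmodule_isLmodule.Build R quot_space qscaleA qscale1 qscaleDr qscaleDl.

Lemma qpiZ a x : a *: qpi x = qpi (a *: x).
Proof. exact: qscaleE. Qed.

Definition qnorm (q : quot_space) : R := inf [set `|z| | z in qset q].

Lemma qnorm_has_inf q : has_inf [set `|z| | z in qset q].
Proof.
split; last by exists 0 => _ [z _ <-].
case: (qsetP q) => z ->; exists `|z|; exists z => //.
by rewrite /coset /= subrr; exact: cs_0.
Qed.

Lemma qnorm_le q z : qset q z -> qnorm q <= `|z|.
Proof. by move=> qz; apply: (ge_inf (qnorm_has_inf q).2); exists z. Qed.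

Lemma qnorm_ge0 q : 0 <= qnorm q.
Proof. by apply: lb_le_inf; [exact: (qnorm_has_inf q).1|move=> _ [z _ <-]]. Qed.

Lemma qnorm_approx q e : 0 < e -> exists2 z, qset q z & `|z| < qnorm q + e.
Proof.
move=> e0; have [_ [z qz <-] ?] := inf_adherent e0 (qnorm_has_inf q).
by exists z.
Qed.

Lemma qnormD q1 q2 : qnorm (q1 + q2) <= qnorm q1 + qnorm q2.
Proof.
elim/qind: q1 => x; elim/qind: q2 => y; rewrite qpiD.
apply/ler_addgt0Pr => e e0.
have e20 : 0 < e / 2 by rewrite divr_gt0.
have [b xb bl] := qnorm_approx (qpi x) e20.
have [c yc cl] := qnorm_approx (qpi y) e20.
have bc : qset (qpi (x + y)) (b + c).
  by rewrite /= /coset /= opprD addrACA; exact: csD.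
apply: (le_trans (qnorm_le bc)); apply: (le_trans (ler_normD b c)).
have -> : e = e / 2 + e / 2 by rewrite -splitr.
lra.
Qed.

Lemma qnormZle l q : qnorm (l *: q) <= `|l| * qnorm q.
Proof.
elim/qind: q => x; rewrite qpiZ.
apply/ler_addgt0Pr => e e0.
have l10 : 0 < `|l| + 1 by rewrite ltr_wpDl.
have d0 : 0 < e / (`|l| + 1) by rewrite divr_gt0.
have [b xb bl] := qnorm_approx (qpi x) d0.
have lb : qset (qpi (l *: x)) (l *: b).
  by rewrite /= /coset /= -scalerBr; exact: csZ.
apply: (le_trans (qnorm_le lb)); rewrite normrZ.
apply: (le_trans (ler_wpM2l (normr_ge0 l) (ltW bl))).
rewrite mulrDr lerD2l mulrA ler_pdivrMr //.
have := normr_ge0 l; nra.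
Qed.

Lemma qnormZ l q : qnorm (l *: q) = `|l| * qnorm q.
Proof.
have [->|l0] := eqVneq l 0.
  by rewrite normr0 mul0r; apply/le_anti; rewrite qnorm_ge0 andbT;
     have := qnormZle 0 q; rewrite normr0 mul0r.
apply/le_anti; rewrite qnormZle /=.
have := qnormZle l^-1 (l *: q); rewrite scalerA mulVf // scale1r normrV ?unitfE //.
by rewrite ler_pdivlMl ?normr_gt0.
Qed.

Lemma qnorm_eq0 q : qnorm q = 0 -> q = 0.
Proof.
elim/qind: q => x qx0; rewrite qpi0; apply/qpi_eq; rewrite subr0.
apply: (@cs_closed _ _ E) => B /nbhs_ballP [e /= e0 eB].
have [b xb] := qnorm_approx (qpi x) e0; rewrite qx0 add0r => be.
exists (x - b); split; first by rewrite -opprB; exact: csN.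
by apply: eB; rewrite -ball_normE /ball_ /= opprB addrC subrK.
Qed.

HB.instance Definition _ :=
  Lmodule_isNormed.Build R quot_space qnormD qnormZ qnorm_eq0.

End Quotient.

Arguments cs_closed {R Z} c.

Section Gap.
Context {R : realType} {W : normedModType R}.

Definition unit_ball (A : set W) : set W := [set w | A w /\ `|w| <= 1].

Definition set_dist (w : W) (A : set W) : R := inf [set `|w - a| | a in A].

Definition hausdorff_dist (A B : set W) : R :=
  Num.max (sup [set set_dist a B | a in A]) (sup [set set_dist b A | b in B]).

Definition gap (E F : set W) : R := hausdorff_dist (unit_ball E) (unit_ball F).

End Gap.

Definition isometric_embedding {R : realType} {X W : normedModType R}
  (U : {linear X -> W}) : Prop := forall x, `|U x| = `|x|.

Definition kadets_dist {R : realType} (X Y : normedModType R) : R :=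
  inf [set r | exists (W : completeNormedModType R)
                      (U : {linear X -> W}) (V : {linear Y -> W}),
               [/\ isometric_embedding U, isometric_embedding V &
                   r = gap (range U) (range V)]].

(* Let c > 2 Λ(E, F) and let U, V embed Z/E and Z/F isometrically into a
   Banach space W.  On W × W take the largest seminorm that keeps both factors
   contractive and puts (U (π_E z), 0) within c‖z‖ of (0, V (π_F z)):
     ‖(u, v)‖ = inf_z ‖u − U (π_E z)‖ + ‖v + V (π_F z)‖ + c‖z‖.
   The estimate ‖π_F z‖ ≤ ‖π_E z‖ + 2 Λ(E, F) ‖z‖ (and its mirror image) makes
   both factor embeddings isometric.  A point π_E z of the unit ball of Z/E
   lifts to some z with ‖z‖ ≈ 1, so it is within c‖z‖ of π_F z, which lies
   almost in the unit ball of Z/F; hence the gap between the copies is ≤ c. *)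

From HB Require Import structures.
From mathcomp Require Import all_boot all_order all_algebra.
From mathcomp Require Import all_classical all_reals all_analysis.
From mathcomp Require Import ring lra.
Import Order.TTheory GRing.Theory Num.Theory.
Import numFieldNormedType.Exports.
Local Open Scope classical_set_scope.
Local Open Scope ring_scope.

Lemma ler_addgt0Pr_scaled {R : realFieldType} (K : R) {x y : R} : 0 <= K ->
  (forall e, 0 < e -> x <= y + e * K) -> x <= y.
Proof.
move=> K0 xyK; apply/ler_addgt0Pr => e e0.
have K1 : 0 < K + 1 by lra.
apply: le_trans (xyK _ (divr_gt0 e0 K1)) _.
by rewrite lerD2l mulrC mulrA ler_pdivrMr //; nra.
Qed.

Lemma cauchy_map_lipschitz {R : realType} {V W : normedModType R}
    (f : V -> W) (k : R) {F : set_system V} {FF : ProperFilter F} : 0 < k ->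
  (forall x y, `|f x - f y| <= k * `|x - y|) -> cauchy F -> cauchy (f @ F).
Proof.
move=> k0 lipf /cauchyP Fc; apply: cauchy_exP => e e0.
have [x Fx] := Fc _ (divr_gt0 e0 k0); exists (f x).
suff : F [set y | ball (f x) e (f y)] by [].
apply: filterS Fx => y; rewrite -!ball_normE /ball_ /= => xy.
by apply: le_lt_trans (lipf x y) _; rewrite -ltr_pdivlMl // mulrC.
Qed.

Section SetDistance.
Context {R : realType} {W : normedModType R}.
Implicit Types (P Q : set W) (a b : W).

Lemma set_dist_lbound a Q : has_lbound [set `|a - b| | b in Q].
Proof. by exists 0 => _ [b _ <-]. Qed.

Lemma set_dist_le {Q b} a : Q b -> set_dist a Q <= `|a - b|.
Proof. by move=> Qb; apply: (ge_inf (set_dist_lbound a Q)); exists b. Qed.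

Lemma set_dist_ge0 a Q : Q !=set0 -> 0 <= set_dist a Q.
Proof.
by move=> [b Qb]; apply: lb_le_inf => [|_ [c _ <-]] //; exists `|a - b|, b.
Qed.

Lemma set_dist_approx {Q e} a : Q !=set0 -> 0 < e ->
  exists2 b, Q b & `|a - b| < set_dist a Q + e.
Proof.
move=> [b Qb] e0.
have Qinf : has_inf [set `|a - b| | b in Q].
  by split; [exists `|a - b|, b | exact: set_dist_lbound].
by have [_ [c Qc <-] ?] := inf_adherent e0 Qinf; exists c.
Qed.

(* The witness is [v / (1 + h)], which lies in the unit ball within [h] of [v]. *)
Lemma set_dist_unit_ball_le {P} a {v h} :
    (forall (k : R) w, P w -> P (k *: w)) -> P v -> 0 <= h -> `|v| <= 1 + h ->
  set_dist a (unit_ball P) <= `|a - v| + h.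
Proof.
move=> Pscale Pv h0 vh; set t := (1 + h)^-1.
have t0 : 0 < t by rewrite invr_gt0; lra.
have tv : `|t *: v| <= 1.
  by rewrite normrZ gtr0_norm // ler_pdivrMl ?mulr1 //; lra.
have tvP : unit_ball P (t *: v) by split => //; exact: Pscale.
apply: le_trans (set_dist_le a tvP) _.
have -> : a - t *: v = (a - v) + (1 - t) *: v.
  by rewrite scalerBl scale1r addrA subrK.
apply: le_trans (ler_normD _ _) _; rewrite lerD2l normrZ.
have t1 : t * (1 + h) = 1 by rewrite mulVf //; lra.
have -> : h = (1 - t) * (1 + h) by rewrite mulrBl t1; lra.
by rewrite ger0_norm ?ler_wpM2l //; nra.
Qed.

Lemma unit_ball0 {P} : P 0 -> unit_ball P 0.
Proof. by move=> P0; split; rewrite ?normr0. Qed.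

Lemma gapC P Q : gap P Q = gap Q P.
Proof. by rewrite /gap /hausdorff_dist maxC. Qed.

Lemma set_dist_le_gap {P Q a} : P 0 -> Q 0 -> unit_ball P a ->
  set_dist a (unit_ball Q) <= gap P Q.
Proof.
move=> P0 Q0 Pa; rewrite /gap /hausdorff_dist le_max; apply/orP; left.
have sup_ex : has_sup [set set_dist a (unit_ball Q) | a in unit_ball P].
  split; first by exists (set_dist 0 (unit_ball Q)), 0 => //; exact: unit_ball0.
  exists 1 => _ [b [_ b1] <-].
  by apply: le_trans (set_dist_le b (unit_ball0 Q0)) _; rewrite subr0.
by apply: sup_upper_bound sup_ex _ _; exists a.
Qed.

Lemma gap_ge0 {P Q} : P 0 -> Q 0 -> 0 <= gap P Q.
Proof.
move=> P0 Q0; apply: le_trans (set_dist_le_gap P0 Q0 (unit_ball0 P0)).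
by apply: set_dist_ge0; exists 0; exact: unit_ball0.
Qed.

Lemma gap_le {P Q} r : P 0 -> Q 0 ->
    (forall a, unit_ball P a -> set_dist a (unit_ball Q) <= r) ->
    (forall b, unit_ball Q b -> set_dist b (unit_ball P) <= r) ->
  gap P Q <= r.
Proof.
move=> P0 Q0 PQ QP; rewrite /gap /hausdorff_dist ge_max.
apply/andP; split; apply: ge_sup.
- by exists (set_dist 0 (unit_ball Q)), 0 => //; exact: unit_ball0.
- by move=> _ [a Pa <-]; exact: PQ.
- by exists (set_dist 0 (unit_ball P)), 0 => //; exact: unit_ball0.
- by move=> _ [b Qb <-]; exact: QP.
Qed.

End SetDistance.

Section QuotientGap.
Context {R : realType} {Z : normedModType R}.
Implicit Types E F : closed_subspace Z.

Lemma qpi_is_linear E : linear (qpi E).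
Proof. by move=> a x y; rewrite qpiZ qpiD. Qed.

HB.instance Definition _ E :=
  GRing.isLinear.Build R Z (quot_space E) *:%R (qpi E) (qpi_is_linear E).

Lemma norm_qpi_le E z : `|qpi E z| <= `|z|.
Proof. by apply: qnorm_le; rewrite /= /coset /= subrr; exact: cs_0. Qed.

Lemma qpi_lift E q {h} : 0 < h -> exists2 z, qpi E z = q & `|z| < `|q| + h.
Proof.
elim/(@qind _ _ E): q => x h0; have [z xz zh] := qnorm_approx (qpi E x) h0.
by exists z => //; apply/qpi_eq.
Qed.

Lemma subspace_gap_approx E F {e h} : cs_set E e -> 0 < h ->
  exists2 f, cs_set F f & `|e - f| <= `|e| * (gap E F + h).
Proof.
move=> Ee h0; have [->|e0] := eqVneq e 0.
  by exists 0; [exact: cs_0 | rewrite subr0 normr0 mul0r].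
have ne0 : 0 < `|e| by rewrite normr_gt0.
set a := `|e|^-1 *: e.
have Ea : unit_ball E a.
  split; first exact: csZ.
  by rewrite normrZ normfV normr_id mulVf ?normr_eq0.
have aF := set_dist_le_gap (cs_0 E) (cs_0 F) Ea.
have [b [Fb _] ab] := set_dist_approx a (ex_intro _ 0 (unit_ball0 (cs_0 F))) h0.
exists (`|e| *: b); first exact: csZ.
have -> : e - `|e| *: b = `|e| *: (a - b).
  by rewrite scalerBr /a scalerA mulfV ?normr_eq0 // scale1r.
rewrite normrZ normr_id ler_pM2l //; lra.
Qed.

Lemma norm_qpi_le_gap E F z {e} :
  cs_set E e -> `|qpi F z| <= `|z - e| + gap E F * `|e|.
Proof.
move=> Ee; apply: (ler_addgt0Pr_scaled `|e|) => // h h0.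
have [f Ff ef] := subspace_gap_approx E F Ee h0.
have : `|qpi F z| <= `|z - f|.
  by apply: qnorm_le; rewrite /= /coset /= addrAC subrr add0r; exact: csN.
have : `|z - f| <= `|z - e| + `|e - f|.
  have -> : z - f = (z - e) + (e - f) by rewrite addrA subrK.
  exact: ler_normD.
move: ef; rewrite mulrDr (mulrC `|e|) (mulrC h); lra.
Qed.

Lemma norm_qpi_le_qpi_gap E F z :
  `|qpi F z| <= `|qpi E z| + 2 * gap E F * `|z|.
Proof.
have L0 := gap_ge0 (cs_0 E) (cs_0 F).
apply: (ler_addgt0Pr_scaled (1 + gap E F)) => [|h h0]; first lra.
have [w wz wh] := qpi_lift E (qpi E z) h0.
have Ezw : cs_set E (z - w) by apply/qpi_eq.
have := norm_qpi_le_gap E F z Ezw; rewrite subKr.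
have := ler_normB z w; have := norm_qpi_le E z; have := normr_ge0 z.
nra.
Qed.

Lemma set_dist_quot_le E F (W : normedModType R) (U : {linear quot_space E -> W})
    (V : {linear quot_space F -> W}) c x :
    isometric_embedding V -> 0 <= c ->
    (forall z, `|U (qpi E z) - V (qpi F z)| <= c * `|z|) -> `|x| <= 1 ->
  set_dist (U x) (unit_ball (range V)) <= c.
Proof.
move=> isoV c0 UV x1; apply: (ler_addgt0Pr_scaled (c + 1)) => [|h h0]; first lra.
have [z zx zh] := qpi_lift E x h0; subst x.
have Vscale k w : range V w -> range V (k *: w).
  by move=> [y _ <-]; exists (k *: y) => //; rewrite linearZ.
have Vz : `|V (qpi F z)| <= 1 + h.
  by rewrite isoV; apply: le_trans (norm_qpi_le F z) _; lra.
have VzV : range V (V (qpi F z)) by exists (qpi F z).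
apply: le_trans (set_dist_unit_ball_le _ Vscale VzV (ltW h0) Vz) _.
have := UV z; have : c * `|z| <= c * (1 + h) by rewrite ler_wpM2l //; lra.
lra.
Qed.

Lemma gap_quot_le E F (W : normedModType R) (U : {linear quot_space E -> W})
    (V : {linear quot_space F -> W}) c :
    isometric_embedding U -> isometric_embedding V -> 0 <= c ->
    (forall z, `|U (qpi E z) - V (qpi F z)| <= c * `|z|) ->
  gap (range U) (range V) <= c.
Proof.
move=> isoU isoV c0 UV.
apply: gap_le; [by exists 0; rewrite ?linear0 .. | |].
- move=> _ [[x _ <-] Ux1]; apply: set_dist_quot_le isoV c0 UV _.
  by rewrite -isoU.
- move=> _ [[y _ <-] Vy1]; apply: set_dist_quot_le isoU c0 _ _ => [z|].
    by rewrite distrC.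
  by rewrite -isoV.
Qed.

End QuotientGap.

Section Glue.
Context {R : realType} {W : completeNormedModType R} {Z : normedModType R}.
Variables (A B : {linear Z -> W}) (c : R).

Definition glue_cond : Prop :=
  [/\ forall z, `|A z| <= `|z|, forall z, `|B z| <= `|z| & 0 < c].

Hypothesis AB : glue_cond.

(* [glued] takes the hypothesis as an argument so that the norm instance below
   may use it. *)
Definition glued (_ : glue_cond) : Type := (W * W)%type.
Local Notation G := (glued AB).
HB.instance Definition _ := Choice.copy G (W * W)%type.
HB.instance Definition _ := GRing.Lmodule.copy G (W * W)%type.

Definition glued_cost (p : G) (z : Z) : R :=
  `|p.1 - A z| + `|p.2 + B z| + c * `|z|.

Definition glued_norm (p : G) : R := inf (range (glued_cost p)).

Let c_gt0 : 0 < c. Proof. by case: AB. Qed.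

Lemma glued_cost_ge0 p z : 0 <= glued_cost p z.
Proof. by rewrite /glued_cost !addr_ge0 ?mulr_ge0 // ltW. Qed.

Lemma glued_norm_le p z : glued_norm p <= glued_cost p z.
Proof.
have lb : has_lbound (range (glued_cost p)).
  by exists 0 => _ [w _ <-]; exact: glued_cost_ge0.
by apply: (ge_inf lb); exists z.
Qed.

Lemma glued_norm_ge p r : (forall z, r <= glued_cost p z) -> r <= glued_norm p.
Proof.
by move=> pr; apply: lb_le_inf => [|_ [z _ <-]]; [exists (glued_cost p 0), 0|].
Qed.

Lemma glued_norm_ge0 p : 0 <= glued_norm p.
Proof. exact/glued_norm_ge/glued_cost_ge0. Qed.

Lemma glued_costD p q z1 z2 :
  glued_cost (p + q) (z1 + z2) <= glued_cost p z1 + glued_cost q z2.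
Proof.
rewrite /glued_cost !linearD /=.
rewrite [p.1 + _ + _]addrACA [p.2 + _ + _]addrACA.
have := ler_normD (p.1 - A z1) (q.1 - A z2).
have := ler_normD (p.2 + B z1) (q.2 + B z2).
have := ler_normD z1 z2; have := c_gt0; nra.
Qed.

Lemma glued_costZ l p z : glued_cost (l *: p) (l *: z) = `|l| * glued_cost p z.
Proof. by rewrite /glued_cost !linearZ /= -!scalerDr !normrZ; ring. Qed.

Lemma glued_normD p q : glued_norm (p + q) <= glued_norm p + glued_norm q.
Proof.
suff : glued_norm (p + q) - glued_norm q <= glued_norm p by lra.
apply: glued_norm_ge => z1.
suff : glued_norm (p + q) - glued_cost p z1 <= glued_norm q by lra.
apply: glued_norm_ge => z2.
have := glued_norm_le (p + q) (z1 + z2); have := glued_costD p q z1 z2; lra.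
Qed.

Lemma glued_normZ l p : glued_norm (l *: p) = `|l| * glued_norm p.
Proof.
have [->|l0] := eqVneq l 0.
  rewrite scale0r normr0 mul0r; apply/le_anti; rewrite glued_norm_ge0 andbT.
  apply: le_trans (glued_norm_le 0 0) _.
  by rewrite /glued_cost /= !linear0 !(addr0, normr0, mulr0).
have l_gt0 : 0 < `|l| by rewrite normr_gt0.
apply/le_anti/andP; split.
  rewrite -ler_pdivrMl //; apply: glued_norm_ge => z.
  by rewrite ler_pdivrMl // -glued_costZ; exact: glued_norm_le.
apply: glued_norm_ge => w; rewrite -(scalerKV l0 w) glued_costZ.
exact/ler_wpM2l/glued_norm_le/ltW.
Qed.

Let m := Num.min 1 c.

Let m_gt0 : 0 < m. Proof. by rewrite lt_min ltr01 c_gt0. Qed.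

Let glued_cost_ge p z :
  m * (`|p.1 - A z| + `|p.2 + B z| + `|z|) <= glued_cost p z.
Proof.
have m1 : m <= 1 by rewrite ge_min lexx.
have mc : m <= c by rewrite ge_min lexx orbT.
by rewrite /glued_cost !mulrDr !lerD ?ler_piMl ?ler_wpM2r.
Qed.

Lemma glued_norm_fst p : m * `|p.1| <= glued_norm p.
Proof.
apply: glued_norm_ge => z; apply: le_trans (glued_cost_ge p z).
rewrite ler_pM2l //.
have : `|p.1| <= `|p.1 - A z| + `|A z| by rewrite -{1}(subrK (A z) p.1) ler_normD.
case: AB => Az _ _; have := Az z; have := normr_ge0 (p.2 + B z); lra.
Qed.

Lemma glued_norm_snd p : m * `|p.2| <= glued_norm p.
Proof.
apply: glued_norm_ge => z; apply: le_trans (glued_cost_ge p z).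
rewrite ler_pM2l //.
have : `|p.2| <= `|p.2 + B z| + `|B z| by rewrite -{1}(addrK (B z) p.2) ler_normB.
case: AB => _ Bz _; have := Bz z; have := normr_ge0 (p.1 - A z); lra.
Qed.

Lemma glued_norm_eq0 p : glued_norm p = 0 -> p = 0.
Proof.
move=> p0; have := glued_norm_fst p; have := glued_norm_snd p.
rewrite {}p0 !pmulr_rle0 // !normr_le0 => /eqP p2 /eqP p1.
by case: p p1 p2 => /= ? ? -> ->.
Qed.

HB.instance Definition _ :=
  Lmodule_isNormed.Build R G glued_normD glued_normZ glued_norm_eq0.

Lemma glued_norm_le_sum (p : G) : `|p| <= `|p.1| + `|p.2|.
Proof.
apply: le_trans (glued_norm_le p 0) _.
by rewrite /glued_cost !linear0 !(addr0, normr0, mulr0).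
Qed.

Lemma glued_complete (F : set_system G) : ProperFilter F -> cauchy F -> cvg F.
Proof.
move=> FF Fc.
have lip (f : G -> W) : (forall p, m * `|f p| <= `|p|) -> additive f ->
    cauchy (f @ F).
  move=> fm fD; apply: (cauchy_map_lipschitz f m^-1) Fc.
    by rewrite invr_gt0.
  by move=> p q; rewrite -fD ler_pdivlMl.
have [l1 Fl1] :=
  (cvg_ex _).1 (cauchy_cvg _ (lip fst glued_norm_fst (fun _ _ => erefl))).
have [l2 Fl2] :=
  (cvg_ex _).1 (cauchy_cvg _ (lip snd glued_norm_snd (fun _ _ => erefl))).
apply/cvg_ex; exists ((l1, l2) : G); apply/cvgrPdist_lt => e e0.
have e2 : 0 < e / 2 by rewrite divr_gt0.
move/cvgrPdist_lt/(_ _ e2): Fl1; move/cvgrPdist_lt/(_ _ e2): Fl2.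
apply: filterS2 => p p2 p1; apply: le_lt_trans (glued_norm_le_sum _) _.
by rewrite [e]splitr ltrD.
Qed.

HB.instance Definition _ := Uniform_isComplete.Build G glued_complete.

Definition glued_inl (w : W) : G := (w, 0).
Definition glued_inr (w : W) : G := (0, w).

Lemma glued_inl_is_linear : linear glued_inl.
Proof.
move=> a u v; rewrite /glued_inl.
change ((a *: u + v, 0) = (a *: u + v, a *: (0 : W) + 0) :> W * W).
by rewrite scaler0 addr0.
Qed.

Lemma glued_inr_is_linear : linear glued_inr.
Proof.
move=> a u v; rewrite /glued_inr.
change ((0, a *: u + v) = (a *: (0 : W) + 0, a *: u + v) :> W * W).
by rewrite scaler0 addr0.
Qed.

HB.instance Definition _ :=
  GRing.isLinear.Build R W G *:%R glued_inl glued_inl_is_linear.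
HB.instance Definition _ :=
  GRing.isLinear.Build R W G *:%R glued_inr glued_inr_is_linear.

Lemma norm_glued_inl w : (forall z, `|A z| <= `|B z| + c * `|z|) ->
  `|glued_inl w| = `|w|.
Proof.
move=> AB_le; apply/le_anti/andP; split.
  by apply: le_trans (glued_norm_le_sum _) _; rewrite normr0 addr0.
apply: glued_norm_ge => z; rewrite /glued_cost /= add0r.
have : `|w| <= `|w - A z| + `|A z| by rewrite -{1}(subrK (A z) w) ler_normD.
have := AB_le z; lra.
Qed.

Lemma norm_glued_inr w : (forall z, `|B z| <= `|A z| + c * `|z|) ->
  `|glued_inr w| = `|w|.
Proof.
move=> BA_le; apply/le_anti/andP; split.
  by apply: le_trans (glued_norm_le_sum _) _; rewrite normr0 add0r.
apply: glued_norm_ge => z; rewrite /glued_cost /= sub0r normrN.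
have : `|w| <= `|w + B z| + `|B z| by rewrite -{1}(addrK (B z) w) ler_normB.
have := BA_le z; lra.
Qed.

Lemma glued_inl_inr_dist z : `|glued_inl (A z) - glued_inr (B z)| <= c * `|z|.
Proof.
apply: le_trans (glued_norm_le _ z) _.
by rewrite /glued_cost /= subr0 subrr add0r addNr !normr0 !add0r.
Qed.

End Glue.

Arguments glued_inl {R W Z A B c} AB.
Arguments glued_inr {R W Z A B c} AB.
Arguments glued_inl_inr_dist {R W Z A B c} AB.

Lemma kadets_dist_le_gap {R : realType} {X Y : normedModType R}
    {W : completeNormedModType R} {U : {linear X -> W}} {V : {linear Y -> W}} :
    isometric_embedding U -> isometric_embedding V ->
  kadets_dist X Y <= gap (range U) (range V).
Proof.
move=> isoU isoV; apply: ge_inf; last by exists W, U, V.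
exists 0 => _ [W' [U' [V' [_ _ ->]]]].
by apply: gap_ge0; exists 0; rewrite ?linear0.
Qed.

Lemma kadets_dist_quot_le {R : realType} {Z : normedModType R}
    (E F : closed_subspace Z) (W : completeNormedModType R)
    (U : {linear quot_space E -> W}) (V : {linear quot_space F -> W}) c :
    isometric_embedding U -> isometric_embedding V -> 2 * gap E F < c ->
  kadets_dist (quot_space E) (quot_space F) <= c.
Proof.
move=> isoU isoV gapc; have L0 := gap_ge0 (cs_0 E) (cs_0 F).
pose A : {linear Z -> W} := U \o qpi E.
pose B : {linear Z -> W} := V \o qpi F.
have AB : glue_cond A B c.
  by split=> [z|z|]; rewrite /= ?isoU ?isoV ?norm_qpi_le //; lra.
have AB_le z : `|A z| <= `|B z| + c * `|z|.
  rewrite /= isoU isoV; have := norm_qpi_le_qpi_gap F E z; rewrite gapC.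
  by have := normr_ge0 z; nra.
have BA_le z : `|B z| <= `|A z| + c * `|z|.
  rewrite /= isoU isoV; have := norm_qpi_le_qpi_gap E F z.
  by have := normr_ge0 z; nra.
have isoUl : isometric_embedding (glued_inl AB \o U).
  by move=> x; rewrite /= norm_glued_inl.
have isoVr : isometric_embedding (glued_inr AB \o V).
  by move=> y; rewrite /= norm_glued_inr.
apply: le_trans (kadets_dist_le_gap isoUl isoVr) _.
apply: gap_quot_le isoUl isoVr _ (glued_inl_inr_dist AB); lra.
Qed.

Theorem theorem4p1 (R : realType) (Z : completeNormedModType R)
    (E F : closed_subspace Z) :
  kadets_dist (quot_space E) (quot_space F) <= 2 * gap (cs_set E) (cs_set F).
Proof.
have L0 := gap_ge0 (cs_0 E) (cs_0 F).
(* The set defining [kadets_dist] is in fact never empty, as the quotients are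
   Banach spaces; splitting on it spares proving that, since an existing pair
   of embeddings supplies the complete space to glue, and [inf set0 = 0]. *)
have [[W [U [V [isoU isoV]]]]|none] :=
  pselect (exists (W : completeNormedModType R)
    (U : {linear quot_space E -> W}) (V : {linear quot_space F -> W}),
    isometric_embedding U /\ isometric_embedding V).
  by apply/ler_addgt0Pr => e e0; apply: kadets_dist_quot_le isoU isoV _; lra.
rewrite /kadets_dist (_ : [set r | _] = set0) ?inf0 ?mulr_ge0 //.
apply/seteqP; split=> // r [W [U [V [isoU isoV _]]]].
by apply: none; exists W, U, V.
Qed.
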